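(* (1) $R\setminus K_\Gamma$ is a countable set. (2) There is $M\in\mathrm{GL}(3,\mathbb R)$ such that every matrix $M^{-1}BM$, $B\in\Gamma$, has all entries strictly positive and determinant one, and there is $c>0$ such that for every $B\in\Gamma$, $\min_{j,k}(M^{-1}BM)_{jk}/\max_{j,k}(M^{-1}BM)_{jk}\ge c$.
   Context: Let $A_1=\begin{pmatrix}1&1&1\\0&1&0\\0&0&1\end{pmatrix}$, $A_2=\begin{pmatrix}1&0&0\\1&1&1\\0&0&1\end{pmatrix}$, $A_3=\begin{pmatrix}1&0&0\\0&1&0\\1&1&1\end{pmatrix}$, $S=\{(x,y,z):x,y,z\ge0,x+y+z=1\}$, and $f_i(v)=A_iv/(\text{sum of coordinates of }A_iv)$ on $S$. The Rauzy gasket $R$ is the unique nonempty compact $R\subset S$ with $R=\bigcup_if_i(R)$; for $\omega\in\{1,2,3\}^{\mathbb N}$, $\Pi(\omega)$ denotes the unique point of $\bigcap_n f_{\omega_1}\circ\cdots\circ f_{\omega_n}(S)$, so $R=\Pi(\{1,2,3\}^{\mathbb N})$. Let $\Gamma=\{A_i^nA_j: i\ne j\in\{1,2,3\},\ n\ge1\}$ and let $K_\Gamma=\Pi(\Sigma')$, where $\Sigma'$ is the set of sequences in $\{1,2,3\}^{\mathbb N}$ that are infinite concatenations of blocks $i^nj$ ($i\ne j$, $n\ge1$), i.e. the limit set of the infinite system $\{f_{B}\}_{B\in\Gamma}$. *)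

From HB Require Import structures.
From mathcomp Require Import all_boot all_order all_algebra.
From mathcomp Require Import all_classical all_reals.
Set Implicit Arguments. Unset Strict Implicit. Unset Printing Implicit Defensive.
Import Order.TTheory GRing.Theory Num.Theory.
Local Open Scope ring_scope.
Local Open Scope classical_set_scope.

(* The positions a, ..., b-1 of w form a block i^n j with i <> j, n >= 1. *)
Definition is_block (w : nat -> 'I_3) (a b : nat) : Prop :=
  (a.+2 <= b)%N /\ (forall m, (a <= m < b.-1)%N -> w m = w a) /\ w b.-1 != w a.

Definition Sigma' (w : nat -> 'I_3) : Prop :=
  exists t : nat -> nat, t 0%N = 0%N /\ forall k, is_block w (t k) (t k.+1).

Section Rauzy.
Variable R : realType.

(* Points of R^3 are column vectors; coordinates 1,2,3 of the paper are 0,1,2. *)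
Definition simplex : set 'cV[R]_3 :=
  [set v | (forall i, 0 <= v i ord0) /\ \sum_(i < 3) v i ord0 = 1].

Definition Amat (i : 'I_3) : 'M[R]_3 :=
  \matrix_(j, k) (if j == i then 1 else (j == k)%:R).

Definition fmap (i : 'I_3) (v : 'cV[R]_3) : 'cV[R]_3 :=
  (\sum_(j < 3) (Amat i *m v) j ord0)^-1 *: (Amat i *m v).

(* f_{w_1} o ... o f_{w_n} (sequences indexed from 0) *)
Fixpoint fcomp (w : nat -> 'I_3) (n : nat) : 'cV[R]_3 -> 'cV[R]_3 :=
  match n with
  | 0 => id
  | n'.+1 => fcomp w n' \o fmap (w n')
  end.

Definition IsPi (w : nat -> 'I_3) (x : 'cV[R]_3) : Prop :=
  forall n, (fcomp w n @` simplex) x.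

Definition rauzy_gasket : set 'cV[R]_3 := [set x | exists w, IsPi w x].

Definition Gamma : set 'M[R]_3 :=
  [set B | exists (i j : 'I_3) (n : nat), i != j /\ (0 < n)%N /\
           B = Amat i ^+ n *m Amat j].

Definition K_Gamma : set 'cV[R]_3 :=
  [set x | exists w, Sigma' w /\ IsPi w x].

Definition mxmax (C : 'M[R]_3) : R :=
  \big[Num.max/C ord0 ord0]_(p : 'I_3 * 'I_3) C p.1 p.2.
Definition mxmin (C : 'M[R]_3) : R :=
  \big[Num.min/C ord0 ord0]_(p : 'I_3 * 'I_3) C p.1 p.2.
End Rauzy.

(* A word outside Sigma' cannot be cut into blocks i^n j, so it is eventually
   constant: w = u i i i ... for a finite word u.  The sets f_i^m(S) shrink to
   the vertex e_i, because f_i maps the gap d = 1 - v_i to d / (1 + d), which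
   after m steps is at most 1 / (m + 1).  Hence Pi(w) = f_u(e_i), and the
   points of R outside K_Gamma are indexed by the countably many pairs (u, i).

   For (2) take M = 10 I - J, with J the all-ones matrix, so that
   M^-1 = (7 I + J) / 70.  As A_i = I + E_i with E_i^2 = 0, every
   B = A_i^n A_j in Gamma is A_j + n E_i A_j.  For i <> j the entries of the
   conjugate of E_i A_j lie in [1/20, 2] and those of the conjugate of A_j are
   at most 2 and at least 1/20 minus the former, so all entries of M^-1 B M lie
   in [n/20, 4 n]: their ratios are bounded below by 1/80. *)

From Pilot Require Import Defs.
From HB Require Import structures.
From mathcomp Require Import all_boot all_order all_algebra.
From mathcomp Require Import all_classical all_reals.
From mathcomp Require Import ring lra.
Set Implicit Arguments. Unset Strict Implicit. Unset Printing Implicit Defensive.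
Import Order.TTheory GRing.Theory Num.Theory.
Local Open Scope ring_scope.
Local Open Scope classical_set_scope.

Definition i0 : 'I_3 := @Ordinal 3 0 isT.
Definition i1 : 'I_3 := @Ordinal 3 1 isT.
Definition i2 : 'I_3 := @Ordinal 3 2 isT.

Lemma ord3P (k : 'I_3) : [\/ k = i0, k = i1 | k = i2].
Proof.
by case: k => [[|[|[|//]]] ?]; [constructor 1 | constructor 2 | constructor 3];
  apply: val_inj.
Qed.

Lemma sum_ord3 (V : zmodType) (F : 'I_3 -> V) :
  \sum_(k < 3) F k = F i0 + F i1 + F i2.
Proof.
by rewrite !big_ord_recr big_ord0 /= add0r; congr (F _ + F _ + F _); apply: val_inj.
Qed.

Lemma natmul_bounded_eq0 (R : archiNumFieldType) (x : R) :
  0 <= x -> (forall m : nat, m%:R * x <= 1) -> x = 0.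
Proof.
move=> x_ge0 bounded; apply/eqP/negPn/negP => x_neq0.
have x_gt0 : 0 < x by rewrite lt_def x_neq0.
have := @archi_boundP _ x^-1; rewrite invr_ge0 x_ge0 => /(_ isT).
by rewrite -div1r ltr_pdivrMr // => /lt_le_trans /(_ (bounded _)); rewrite ltxx.
Qed.

Lemma nonSigma'_eventually_const (w : nat -> 'I_3) :
  ~ Sigma' w -> exists N, forall m, (N <= m)%N -> w m = w N.
Proof.
move=> notS; apply: contrapT => not_const; apply: notS.
have change a : exists m, (a < m)%N && (w m != w a).
  apply: contrapT => no_change; apply: not_const; exists a => m a_le_m.
  apply: contrapT => /eqP ne; apply: no_change; exists m.
  by rewrite ne andbT ltn_neqAle a_le_m andbT; apply: contra ne => /eqP ->.
pose t k := iter k (fun a => (ex_minn (change a)).+1) 0%N.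
exists t; split=> // k /=; set a := t k.
case: ex_minnP => m /andP[a_lt_m ne] min_m; split=> //; split=> // j /andP[a_le_j j_lt_m].
apply/eqP; apply: contraTT j_lt_m => ne_j; rewrite -leqNgt; apply: min_m.
by rewrite ne_j andbT ltn_neqAle a_le_j andbT; apply: contra ne_j => /eqP <-.
Qed.

Section SimplexDynamics.
Variable R : realType.
Implicit Types (v z : 'cV[R]_3) (i k : 'I_3) (w : nat -> 'I_3).

Local Notation fmap := (@Defs.fmap R).
Local Notation fcomp := (@Defs.fcomp R).
Local Notation simplex := (@simplex R).

Definition vertex i : 'cV[R]_3 := \col_k (k == i)%:R.

Lemma simplexE v : simplex v <->
  [/\ 0 <= v i0 ord0, 0 <= v i1 ord0, 0 <= v i2 ord0
     & v i0 ord0 + v i1 ord0 + v i2 ord0 = 1].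
Proof.
rewrite /simplex /= sum_ord3; split; first by case=> v_ge0 ->; split.
by case=> ? ? ? ->; split=> // k; case: (ord3P k) => ->.
Qed.

Lemma simplex_coord_bound v k : simplex v -> 0 <= v k ord0 <= 1.
Proof. by move=> /simplexE[? ? ? ?]; apply/andP; case: (ord3P k) => ->; split; lra. Qed.

Lemma simplex_vertex v i : simplex v -> 1 <= v i ord0 -> v = vertex i.
Proof.
move=> /simplexE[? ? ? ?] vi_ge1; apply/matrixP => k l; rewrite (ord1 l) mxE.
by move: vi_ge1; case: (ord3P i) => ->; case: (ord3P k) => -> /=; lra.
Qed.

Lemma fmapE i v : simplex v -> forall k,
  fmap i v k ord0 = (if k == i then 1 else v k ord0) / (2 - v i ord0).
Proof.
move=> /simplexE[? ? ? sum1] k.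
have Av m : (Amat R i *m v) m ord0 = if m == i then 1 else v m ord0.
  rewrite !mxE sum_ord3 !mxE.
  by case: (ord3P i) => ->; case: (ord3P m) => -> /=; lra.
rewrite /Defs.fmap mxE Av (eq_bigr _ (fun m _ => Av m)) sum_ord3 mulrC.
by congr (_ * _^-1); case: (ord3P i) => -> /=; lra.
Qed.

Lemma fmap_simplex i v : simplex v -> simplex (fmap i v).
Proof.
move=> Sv; have /andP[? ?] := simplex_coord_bound i Sv.
have d_gt0 : 0 < 2 - v i ord0 by lra.
split=> [k|].
  rewrite fmapE //; apply: divr_ge0; last exact: ltW.
  by case: ifP => // _; have /andP[] := simplex_coord_bound k Sv.
rewrite (eq_bigr _ (fun k _ => fmapE i Sv k)) -mulr_suml sum_ord3.
move/simplexE: Sv => [? ? ? ?].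
have -> : (if i0 == i then 1 else v i0 ord0) + (if i1 == i then 1 else v i1 ord0) +
          (if i2 == i then 1 else v i2 ord0) = 2 - v i ord0.
  by case: (ord3P i) => -> /=; lra.
by rewrite divff // lt0r_neq0.
Qed.

Lemma fmap_inj i v v' : simplex v -> simplex v' -> fmap i v = fmap i v' -> v = v'.
Proof.
move=> Sv Sv' eq_f.
have /andP[? ?] := simplex_coord_bound i Sv; have /andP[? ?] := simplex_coord_bound i Sv'.
have eq_fk k : (if k == i then 1 else v k ord0) / (2 - v i ord0) =
                (if k == i then 1 else v' k ord0) / (2 - v' i ord0).
  by have := congr1 (fun u : 'cV[R]_3 => u k ord0) eq_f; rewrite /= !fmapE.
have eq_vi : v i ord0 = v' i ord0.
  by move: (eq_fk i); rewrite eqxx !div1r => /invr_inj; lra.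
apply/matrixP => k l; rewrite (ord1 l); move: (eq_fk k).
case: eqP => [-> //|_]; rewrite eq_vi; apply: mulIf.
by rewrite invr_eq0 lt0r_neq0 //; lra.
Qed.

Lemma iter_fmap_simplex i m z : simplex z -> simplex (iter m (fmap i) z).
Proof. by move=> Sz; elim: m => //= m; apply: fmap_simplex. Qed.

Lemma fmap_gapE i v : simplex v ->
  1 - fmap i v i ord0 = (1 - v i ord0) / (2 - v i ord0).
Proof.
move=> Sv; have /andP[? ?] := simplex_coord_bound i Sv.
by rewrite fmapE // eqxx; field; rewrite lt0r_neq0 //; lra.
Qed.

Lemma iter_fmap_gap_bound i m z : simplex z ->
  m.+1%:R * (1 - iter m (fmap i) z i ord0) <= 1.
Proof.
move=> Sz; elim: m => [|m IH] /=.
  by have /andP[? ?] := simplex_coord_bound i Sz; rewrite mul1r; lra.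
have /andP[? ?] := simplex_coord_bound i (iter_fmap_simplex i m Sz).
rewrite fmap_gapE; last exact: iter_fmap_simplex.
rewrite mulrA ler_pdivrMr; last lra.
by rewrite mul1r -natr1 mulrDl mul1r; lra.
Qed.

Lemma iter_fmap_images_vertex i y :
  (forall m, (iter m (fmap i) @` simplex) y) -> y = vertex i.
Proof.
move=> y_in; have Sy : simplex y by have [z Sz <-] := y_in 0%N.
have /andP[? ?] := simplex_coord_bound i Sy.
apply: simplex_vertex => //.
suff : 1 - y i ord0 = 0 by lra.
apply: natmul_bounded_eq0 => [|[|m]]; first lra.
  by rewrite mul0r ler01.
by have [z Sz <-] := y_in m; apply: iter_fmap_gap_bound.
Qed.

Lemma fcomp_inj w n v v' :
  simplex v -> simplex v' -> fcomp w n v = fcomp w n v' -> v = v'.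
Proof.
elim: n v v' => //= n IH v v' Sv Sv' eq_f; apply: (fmap_inj Sv Sv').
by apply: IH; [exact: fmap_simplex | exact: fmap_simplex | exact: eq_f].
Qed.

Lemma fcomp_ext w w' n : (forall m, (m < n)%N -> w m = w' m) -> fcomp w n = fcomp w' n.
Proof. by elim: n => //= n IH eq_w; rewrite eq_w // IH // => m /ltnW; apply: eq_w. Qed.

Lemma fcomp_const_tail w N m v : (forall m, (N <= m)%N -> w m = w N) ->
  fcomp w (N + m) v = fcomp w N (iter m (fmap (w N)) v).
Proof.
move=> const; elim: m v => [|m IH] v; first by rewrite addn0.
by rewrite addnS /= IH const ?leq_addr // -iterSr.
Qed.

Lemma IsPi_const_tail w N x : (forall m, (N <= m)%N -> w m = w N) ->
  IsPi w x -> x = fcomp w N (vertex (w N)).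
Proof.
move=> const Pix.
have x_in m : exists2 v, simplex v & fcomp w N (iter m (fmap (w N)) v) = x.
  by have [v Sv <-] := Pix (N + m)%N; exists v; rewrite // fcomp_const_tail.
have [v0 Sv0 eq_x0] := x_in 0%N; rewrite -eq_x0; congr (fcomp w N _).
apply: iter_fmap_images_vertex => m; have [v Sv eq_x] := x_in m.
exists v => //; apply: (@fcomp_inj w N) => //; first exact: iter_fmap_simplex.
by rewrite eq_x eq_x0.
Qed.

Definition vertex_image (p : seq 'I_3 * 'I_3) : 'cV[R]_3 :=
  fcomp (nth ord0 p.1) (size p.1) (vertex p.2).

Lemma rauzy_gasket_setD_K_Gamma_countable : countable (@rauzy_gasket R `\` @K_Gamma R).
Proof.
apply: (@sub_countable _ _ _ (vertex_image @` setT)); last first.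
  exact: sub_countable (card_image_le _ _) (countableP _).
apply: subset_card_le => x [[w Pix] notK].
have [N const] : exists N, forall m, (N <= m)%N -> w m = w N.
  by apply: nonSigma'_eventually_const => Sw; apply: notK; exists w.
exists (mkseq w N, w N) => //.
rewrite /vertex_image size_mkseq (IsPi_const_tail const Pix).
by rewrite (@fcomp_ext _ w) // => m m_lt_N; rewrite nth_mkseq.
Qed.

End SimplexDynamics.

Lemma det_invmx_conj (R : comUnitRingType) n (M B : 'M[R]_n) :
  M \in unitmx -> \det (invmx M *m B *m M) = \det B.
Proof.
by move=> uM; rewrite !det_mulmx det_inv mulrAC mulVr ?mul1r // -unitmxE.
Qed.

Section Conjugation.
Variable R : realType.
Implicit Types (i j : 'I_3) (C : 'M[R]_3).
Local Notation Gamma := (@Gamma R).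

Lemma mxmin_ge C l : (forall a b, l <= C a b) -> l <= mxmin C.
Proof.
move=> l_le; rewrite /mxmin; elim/big_rec: _ => [|p x _ Hx]; first exact: l_le.
by rewrite le_min l_le Hx.
Qed.

Lemma mxmax_le C u : (forall a b, C a b <= u) -> mxmax C <= u.
Proof.
move=> le_u; rewrite /mxmax; elim/big_rec: _ => [|p x _ Hx]; first exact: le_u.
by rewrite ge_max le_u Hx.
Qed.

Lemma mxmax_ge C a b : C a b <= mxmax C.
Proof. by rewrite /mxmax (bigD1 (a, b)) //= le_max lexx. Qed.

Lemma mxmin_div_mxmax_ge C l u : 0 < l -> (forall a b, l <= C a b <= u) ->
  l / u <= mxmin C / mxmax C.
Proof.
move=> l_gt0 C_bnd.
have min_ge : l <= mxmin C by apply: mxmin_ge => a b; case/andP: (C_bnd a b).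
have max_le : mxmax C <= u by apply: mxmax_le => a b; case/andP: (C_bnd a b).
have max_gt0 : 0 < mxmax C.
  have /andP[l_le _] := C_bnd ord0 ord0.
  exact: lt_le_trans l_gt0 (le_trans l_le (mxmax_ge C ord0 ord0)).
have u_gt0 : 0 < u by apply: lt_le_trans max_le.
by rewrite ler_pdivrMr // mulrAC ler_pdivlMr // ler_pM // ltW.
Qed.

Definition Mconj : 'M[R]_3 := \matrix_(a, b) ((a == b)%:R * 10 - 1).
Definition Mconj_inv : 'M[R]_3 := \matrix_(a, b) (((a == b)%:R * 7 + 1) / 70).
Definition Emx i : 'M[R]_3 := \matrix_(a, b) (if a == i then (b != i)%:R else 0).

Local Notation conjM X := (Mconj_inv *m X *m Mconj).

Lemma mulVMconj : Mconj_inv *m Mconj = 1%:M.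
Proof.
apply/matrixP => a b; rewrite !mxE sum_ord3 !mxE.
by case: (ord3P a) => ->; case: (ord3P b) => -> /=; field.
Qed.

Lemma Mconj_unit : Mconj \in unitmx.
Proof. by case: (mulmx1_unit mulVMconj). Qed.

Lemma invmx_Mconj : invmx Mconj = Mconj_inv.
Proof. by rewrite -[RHS](mulmxK Mconj_unit) mulVMconj mul1mx. Qed.

Lemma Amat_split i : Amat R i = 1%:M + Emx i.
Proof.
apply/matrixP => a b; rewrite !mxE.
by case: (ord3P i) => ->; case: (ord3P a) => ->; case: (ord3P b) => -> /=;
  rewrite ?addr0 ?add0r.
Qed.

Lemma Emx_sqr i : Emx i *m Emx i = 0.
Proof.
apply/matrixP => a b; rewrite !mxE sum_ord3 !mxE.
by case: (ord3P i) => ->; case: (ord3P a) => ->; case: (ord3P b) => -> /=;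
  rewrite ?mulr0 ?mul0r ?addr0 ?add0r.
Qed.

Lemma Amat_exp i n : Amat R i ^+ n = 1%:M + n%:R *: Emx i.
Proof.
elim: n => [|n IH]; first by rewrite expr0 scale0r addr0.
rewrite exprSr IH Amat_split -[(_ + _) * _]/(mulmx _ _).
rewrite mulmxDl mul1mx mulmxDr mulmx1.
rewrite -scalemxAl Emx_sqr scaler0 addr0 -natr1 scalerDl scale1r.
by rewrite [n%:R *: _ + _]addrC addrA.
Qed.

Lemma det_Amat i : \det (Amat R i) = 1.
Proof.
rewrite (expand_det_row _ 0) !big_ord_recl big_ord0 /cofactor.
rewrite !(expand_det_row _ 0) !big_ord_recl !big_ord0 /cofactor !det_mx11 !mxE /=.
by case: (ord3P i) => -> /=; ring.
Qed.

Lemma det_Gamma B : Gamma B -> \det B = 1.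
Proof.
case=> i [j [n [_ [_ ->]]]]; rewrite det_mulmx det_Amat mulr1.
elim: n => [|n IH]; first by rewrite expr0 det1.
by rewrite exprSr -[_ * _]/(mulmx _ _) det_mulmx IH det_Amat mulr1.
Qed.

Lemma conjM_Gamma_decomp i j n :
  conjM (Amat R i ^+ n *m Amat R j) =
  conjM (Amat R j) + n%:R *: conjM (Emx i *m Amat R j).
Proof.
by rewrite Amat_exp mulmxDl mul1mx mulmxDr mulmxDl -!scalemxAl -scalemxAr -scalemxAl.
Qed.

Lemma conjM_entry_bounds i j a b : i != j ->
  [/\ 1/20 <= conjM (Emx i *m Amat R j) a b, conjM (Emx i *m Amat R j) a b <= 2,
      1/20 <= conjM (Amat R j) a b + conjM (Emx i *m Amat R j) a b
    & conjM (Amat R j) a b <= 2].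
Proof.
rewrite !(mxE, sum_ord3).
case: (ord3P i) => ->; case: (ord3P j) => -> //= _;
  case: (ord3P a) => ->; case: (ord3P b) => -> /=; split; lra.
Qed.

Lemma conjM_Gamma_entry_bounds B : Gamma B ->
  exists2 n : R, 1 <= n & forall a b, n / 20 <= conjM B a b <= 4 * n.
Proof.
case=> i [j [n [ij [n_gt0 ->]]]]; exists n%:R => [|a b]; first by rewrite ler1n.
have n_ge1 : 1 <= n%:R :> R by rewrite ler1n.
have [C1_ge C1_le C01_ge C0_le] := conjM_entry_bounds a b ij.
rewrite conjM_Gamma_decomp.
have -> : (conjM (Amat R j) + n%:R *: conjM (Emx i *m Amat R j)) a b =
          conjM (Amat R j) a b + n%:R * conjM (Emx i *m Amat R j) a b by rewrite !mxE.
set C0 := conjM (Amat R j) a b in C01_ge C0_le *.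
set C1 := conjM (Emx i *m Amat R j) a b in C1_ge C1_le C01_ge *.
have C1_scaled_ge : (n%:R - 1) * (1/20) <= (n%:R - 1) * C1.
  by rewrite ler_wpM2l // subr_ge0.
have C1_scaled_le : n%:R * C1 <= n%:R * 2.
  by rewrite ler_wpM2l // (le_trans ler01 n_ge1).
apply/andP; split; lra.
Qed.

End Conjugation.

Theorem proposition6p5 (R : realType) :
  countable (@rauzy_gasket R `\` @K_Gamma R) /\
  exists M : 'M[R]_3, M \in unitmx /\
    (forall B, @Gamma R B ->
       (forall j k, 0 < (invmx M *m B *m M) j k) /\ \det (invmx M *m B *m M) = 1) /\
    exists c : R, 0 < c /\
      forall B, @Gamma R B ->
        c <= mxmin (invmx M *m B *m M) / mxmax (invmx M *m B *m M).
Proof.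
split; first exact: rauzy_gasket_setD_K_Gamma_countable.
exists (Mconj R); split; first exact: Mconj_unit.
split=> [B GB|].
  split; last by rewrite det_invmx_conj ?Mconj_unit ?det_Gamma.
  have [n n_ge1 bnd] := conjM_Gamma_entry_bounds GB.
  move=> a b; rewrite invmx_Mconj; case/andP: (bnd a b) => + _.
  by apply: lt_le_trans; lra.
exists (1/80); split=> [|B GB]; first lra.
have [n n_ge1 bnd] := conjM_Gamma_entry_bounds GB.
rewrite invmx_Mconj (_ : 1/80 = (n/20) / (4*n)); last by field; rewrite gt_eqF //; lra.
by apply: mxmin_div_mxmax_ge bnd; lra.
Qed.
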